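(* For every unital Abelian po-group $(A,u)$, the functor $(A,u)\otimes-\colon\mathbf{POG}_u\to\mathbf{POG}_u$ preserves colimits over every small connected category $\mathcal{D}$.
   Context: $\mathbf{POG}_u$ is the category of Abelian po-groups with order unit (an element $u\ge0$ such that every $x$ satisfies $x\le nu$ for some $n\in\mathbb{N}$) and order-preserving, unit-preserving group homomorphisms. The tensor product $(A,u)\otimes(B,v)=(A\otimes B,u\otimes v)$ is the Abelian group tensor product with positive cone generated by the elementary tensors $a\otimes b$, $a\in A^+$, $b\in B^+$ (it is universal for bihomomorphisms: maps additive in each variable, positive on positives, unit to unit). A category is connected if it is nonempty and any two objects are joined by a zigzag of morphisms. A functor $\Phi$ preserves colimits over $\mathcal{D}$ if it sends every colimiting cocone of a $\mathcal{D}$-shaped diagram to a colimiting cocone. *)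

From HB Require Import structures.
From mathcomp Require Import all_boot all_order all_algebra.
From Stdlib Require Import Relations.
Set Implicit Arguments. Unset Strict Implicit. Unset Printing Implicit Defensive.
Import GRing.Theory.
Local Open Scope ring_scope.

(* A partial order on an Abelian group is given by its positive cone P:
   x <= y  iff  y - x \in P.  P is a submonoid with P /\ -P = {0}. *)
Record pog := Pog {
  car :> zmodType;
  pos : car -> Prop;
  unit : car;
  pos0 : pos 0;
  posD : forall x y, pos x -> pos y -> pos (x + y);
  pos_antisym : forall x, pos x -> pos (- x) -> x = 0;
  pos_unit : pos unit;
  (* order unit: every x satisfies x <= n u for some n *)
  unit_order : forall x : car, exists n : nat, pos (unit *+ n - x)
}.

Record pmor (A B : pog) := PMor {
  pm :> car A -> car B;
  pm_add : forall x y, pm (x + y) = pm x + pm y;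
  pm_pos : forall x, pos x -> pos (pm x);
  pm_unit : pm (unit A) = unit B
}.

Record category := MkCategory {
  Obj : Type;
  Hom : Obj -> Obj -> Type;
  idc : forall i, Hom i i;
  comp : forall i j k, Hom j k -> Hom i j -> Hom i k;
  comp_idl : forall i j (f : Hom i j), comp (idc j) f = f;
  comp_idr : forall i j (f : Hom i j), comp f (idc i) = f;
  comp_assoc : forall i j k l (f : Hom i j) (g : Hom j k) (h : Hom k l),
      comp h (comp g f) = comp (comp h g) f
}.
Arguments Hom : clear implicits.
Arguments idc : clear implicits.
Arguments comp c {i j k}.

Definition connected (D : category) : Prop :=
  inhabited (Obj D) /\
  forall i j : Obj D,
    clos_refl_sym_trans (Obj D) (fun a b => inhabited (Hom D a b)) i j.

Definition is_diagram (D : category) (Fo : Obj D -> pog)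
  (Fm : forall i j, Hom D i j -> pmor (Fo i) (Fo j)) : Prop :=
  (forall i x, Fm i i (idc D i) x = x) /\
  (forall i j k (f : Hom D i j) (g : Hom D j k) x,
      Fm i k (comp D g f) x = Fm j k g (Fm i j f x)).

Definition is_cocone (D : category) (Fo : Obj D -> pog)
  (Fm : forall i j, Hom D i j -> pmor (Fo i) (Fo j))
  (C : pog) (c : forall i, pmor (Fo i) C) : Prop :=
  forall i j (d : Hom D i j) x, c j (Fm i j d x) = c i x.

Definition is_colimit (D : category) (Fo : Obj D -> pog)
  (Fm : forall i j, Hom D i j -> pmor (Fo i) (Fo j))
  (C : pog) (c : forall i, pmor (Fo i) C) : Prop :=
  is_cocone Fm c /\
  forall (C' : pog) (c' : forall i, pmor (Fo i) C'),
    is_cocone Fm c' ->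
    exists h : pmor C C',
      (forall i x, h (c i x) = c' i x) /\
      (forall h' : pmor C C', (forall i x, h' (c i x) = c' i x) ->
         forall y, h' y = h y).

Definition biadditive (A B : zmodType) (G : zmodType) (beta : A -> B -> G) :=
  (forall a a' b, beta (a + a') b = beta a b + beta a' b) /\
  (forall a b b', beta a (b + b') = beta a b + beta a b').

(* A realization of the functor (A,u) (x) - : for each object B, an object
   T B together with a map tau_B : A x B -> T B which is the Abelian-group
   tensor product (universal among biadditive maps into Abelian groups),
   whose positive cone is the submonoid generated by the elementary tensors
   a (x) b (a, b >= 0), and whose unit is u (x) v; on morphisms, T f is
   id_A (x) f, i.e. T f (a (x) b) = a (x) f b. *)
Record tensor_functor (A : pog) := TensorFunctor {
  T : pog -> pog;
  tau : forall B : pog, car A -> car B -> car (T B);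
  tau_biadd : forall B : pog, biadditive (@tau B);
  tau_univ : forall (B : pog) (G : zmodType) (beta : car A -> car B -> G),
      biadditive beta ->
      exists phi : car (T B) -> G,
        (forall x y, phi (x + y) = phi x + phi y) /\
        (forall a b, phi (tau a b) = beta a b) /\
        (forall psi : car (T B) -> G,
            (forall x y, psi (x + y) = psi x + psi y) ->
            (forall a b, psi (tau a b) = beta a b) ->
            forall z, psi z = phi z);
  tau_pos : forall (B : pog) (z : car (T B)),
      pos z <->
      exists s : seq (car A * car B),
        (forall p, p \in s -> pos p.1 /\ pos p.2) /\
        z = \sum_(p <- s) tau p.1 p.2;
  tau_unit : forall B : pog, unit (T B) = tau (unit A) (unit B);
  Tm : forall B B' : pog, pmor B B' -> pmor (T B) (T B');
  Tm_tau : forall (B B' : pog) (f : pmor B B') a b,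
      Tm f (tau a b) = tau a (f b)
}.

Definition preserves_colimits_over (A : pog) (Phi : tensor_functor A)
  (D : category) : Prop :=
  forall (Fo : Obj D -> pog) (Fm : forall i j, Hom D i j -> pmor (Fo i) (Fo j)),
    is_diagram Fm ->
    forall (C : pog) (c : forall i, pmor (Fo i) C),
      is_colimit Fm c ->
      is_colimit (Fo := fun i => T Phi (Fo i))
        (fun i j d => Tm Phi (Fm i j d)) (fun i => Tm Phi (c i)).

From Pilot Require Import Defs.
From HB Require Import structures.
From mathcomp Require Import all_boot all_order all_algebra.
From mathcomp Require Import boolp.
From Stdlib Require Import Relations.
Set Implicit Arguments. Unset Strict Implicit. Unset Printing Implicit Defensive.
Import GRing.Theory.
Local Open Scope ring_scope.

(* For a >= 0, a cocone c' : T (F i) -> C' has a "slice" x |-> c' i (a (x) x), a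
   cocone of positive additive maps sending all units to one element (the
   diagram is connected).  The universal property of the colimit C only sees
   unit-preserving maps, but a positive additive map g lands in the order ideal
   generated by g (unit), itself a unital po-group with unit g (unit); so each
   slice factors uniquely through C as G a.  Uniqueness makes a |-> G a additive
   on the positive cone, which generates A, so G extends to a biadditive map
   A x C -> C', and the universal property of the tensor product yields the
   factorization T C -> C'. *)

Section AdditiveMaps.
Variables (U V : zmodType) (f : U -> V).
Hypothesis fD : {morph f : x y / x + y}.

Lemma add_morph0 : f 0 = 0.
Proof. by apply: (addrI (f 0)); rewrite -fD !addr0. Qed.

Let fA : {additive U -> V} :=
  HB.pack f (GRing.isNmodMorphism.Build U V f (add_morph0, fD)).

Lemma add_morphB : {morph f : x y / x - y}.
Proof. exact: raddfB fA. Qed.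

Lemma add_morphMn n : {morph f : x / x *+ n}.
Proof. exact: (raddfMn fA n). Qed.

Lemma add_morph_sum (I : Type) (r : seq I) (F : I -> U) :
  f (\sum_(i <- r) F i) = \sum_(i <- r) f (F i).
Proof. exact: (raddf_sum fA r predT F). Qed.

End AdditiveMaps.

HB.instance Definition _ (B C : pog) (f : pmor B C) :=
  GRing.isNmodMorphism.Build (car B) (car C) (pm f)
    (add_morph0 (pm_add f), pm_add f).

Section PositiveCone.
Variable B : pog.
Implicit Types x y : car B.

Lemma posMn x n : pos x -> pos (x *+ n).
Proof.
move=> px; elim: n => [|n IHn]; first by rewrite mulr0n; apply: pos0.
by rewrite mulrS; apply: posD.
Qed.

Lemma pos_sum (I : eqType) (r : seq I) (F : I -> car B) :
  (forall i, i \in r -> pos (F i)) -> pos (\sum_(i <- r) F i).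
Proof.
elim: r => [|i r IHr] posF; first by rewrite big_nil; apply: pos0.
rewrite big_cons; apply: posD; first by apply: posF; rewrite mem_head.
by apply: IHr => j rj; apply: posF; rewrite inE rj orbT.
Qed.

Lemma pos_difference x : exists p q, [/\ pos p, pos q & x = p - q].
Proof.
have [n posnx] := unit_order x.
exists (unit B *+ n), (unit B *+ n - x); split => //.
  exact/posMn/pos_unit.
by rewrite opprB addrC subrK.
Qed.

Variable M : zmodType.

Lemma additive_eq_on_pos (f g : car B -> M) :
  {morph f : x y / x + y} -> {morph g : x y / x + y} ->
  (forall x, pos x -> f x = g x) -> f =1 g.
Proof.
move=> fD gD fg x; have [p [q [pp pq ->]]] := pos_difference x.
by rewrite (add_morphB fD) (add_morphB gD) !fg.
Qed.

Lemma pos_additive_extension (f : car B -> M) :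
  (forall x y, pos x -> pos y -> f (x + y) = f x + f y) ->
  exists F : car B -> M, {morph F : x y / x + y} /\ forall x, pos x -> F x = f x.
Proof.
move=> fD.
have f0 : f 0 = 0 by apply: (addrI (f 0)); rewrite -fD ?addr0 //; apply: pos0.
have fB_eq p q p' q' : pos p -> pos q -> pos p' -> pos q' ->
    p - q = p' - q' -> f p - f q = f p' - f q'.
  move=> pp pq pp' pq' /eqP; rewrite subr_eq addrAC eq_sym subr_eq => /eqP pq_eq.
  apply/eqP; rewrite subr_eq addrAC eq_sym subr_eq -!fD //.
  by rewrite pq_eq.
have diff_value x : exists m, forall p q, pos p -> pos q -> x = p - q ->
    m = f p - f q.
  have [p0 [q0 [pp0 pq0 ->]]] := pos_difference x.
  by exists (f p0 - f q0) => p q pp pq; apply: fB_eq.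
have [F FP] := choice diff_value.
exists F; split; last first.
  by move=> x px; rewrite (FP x x 0) ?f0 ?subr0 //; apply: pos0.
move=> x y; have [p [q [pp pq ->]]] := pos_difference x.
have [p' [q' [pp' pq' ->]]] := pos_difference y.
rewrite (FP _ (p + p') (q + q')); [|exact: posD|exact: posD|].
  by rewrite (FP (p - q) p q) // (FP (p' - q') p' q') // !fD // opprD addrACA.
by rewrite opprD addrACA.
Qed.

End PositiveCone.

Definition order_ideal (C : pog) (e : car C) : {pred car C} :=
  fun y => `[< exists n, pos (e *+ n - y) /\ pos (e *+ n + y) >].

Lemma order_ideal_zmod_closed (C : pog) (e : car C) : zmod_closed (order_ideal e).
Proof.
split.
  by apply/asboolP; exists 0%N; rewrite mulr0n subr0 addr0; split; apply: pos0.
move=> y z /asboolP [n [pny pny']] /asboolP [m [pmz pmz']]; apply/asboolP.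
exists (n + m)%N; rewrite mulrnDr; split.
  by rewrite opprB [z - y]addrC addrACA; apply: posD.
by rewrite addrACA; apply: posD.
Qed.

HB.instance Definition _ (C : pog) (e : car C) :=
  GRing.isZmodClosed.Build (car C) (order_ideal e) (order_ideal_zmod_closed e).

Record ideal_elem (C : pog) (e : car C) :=
  IdealElem { ideal_val :> car C; ideal_valP : ideal_val \in order_ideal e }.

HB.instance Definition _ (C : pog) (e : car C) := [isSub for @ideal_val C e].
HB.instance Definition _ (C : pog) (e : car C) := [Choice of ideal_elem e by <:].
HB.instance Definition _ (C : pog) (e : car C) :=
  [SubChoice_isSubZmodule of ideal_elem e by <:].

Lemma order_ideal_gen (C : pog) (e : car C) : pos e -> e \in order_ideal e.
Proof.
move=> pe; apply/asboolP; exists 1%N; rewrite mulr1n subrr.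
by split; [apply: pos0 | apply: posD].
Qed.

Definition ideal_pog (C : pog) (e : car C) (pe : pos e) : pog.
Proof.
refine (@Pog (ideal_elem e) (fun y => pos (val y)) (IdealElem (order_ideal_gen pe))
  _ _ _ pe _).
- by rewrite raddf0; apply: pos0.
- by move=> y z py pz; rewrite raddfD; apply: posD.
- move=> y py pNy; apply: val_inj; rewrite raddf0.
  by apply: pos_antisym; rewrite -?raddfN.
- move=> y; have /asboolP [n [pny _]] := ideal_valP y.
  by exists n; rewrite raddfB raddfMn.
Defined.

Lemma pos_additive_in_ideal (B C : pog) (g : car B -> car C) :
  {morph g : x y / x + y} -> {homo g : x / pos x} ->
  forall x, g x \in order_ideal (g (unit B)).
Proof.
move=> gD gP x; apply/asboolP.
have [n pnx] := unit_order x; have [m pmNx] := unit_order (- x).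
have pos_unitMn k : pos (g (unit B *+ k)) by apply/gP/posMn/pos_unit.
exists (n + m)%N; rewrite -(add_morphMn gD) mulrnDr gD; split.
  by rewrite addrAC -(add_morphB gD); apply: posD; [apply: gP|].
by rewrite -addrA -gD -[x]opprK; apply: posD; [|apply: gP].
Qed.

Section IdealCorestriction.
Variables (B C : pog) (e : car C) (pe : pos e) (g : car B -> car C).
Hypotheses (gD : {morph g : x y / x + y}) (gP : {homo g : x / pos x}).
Hypothesis g_unit : g (unit B) = e.

Let g_in_ideal x : g x \in order_ideal e.
Proof. by rewrite -g_unit; apply: pos_additive_in_ideal. Qed.

Definition ideal_corestr : pmor B (ideal_pog pe).
Proof.
refine (@PMor B (ideal_pog pe) (fun x => IdealElem (g_in_ideal x)) _ _ _).
- by move=> x y; apply: val_inj; rewrite raddfD /= gD.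
- by move=> x px; apply: gP.
- exact: val_inj.
Defined.

Lemma ideal_corestrE x : val (ideal_corestr x) = g x.
Proof. by []. Qed.

End IdealCorestriction.

Definition pmor_comp (A B C : pog) (g : pmor B C) (f : pmor A B) : pmor A C.
Proof.
refine (@PMor A C (g \o f) _ _ _) => /=.
- by move=> x y; rewrite !raddfD.
- by move=> x px; apply/pm_pos/pm_pos.
- by rewrite !pm_unit.
Defined.

Lemma compatible_unit_zigzag (D : category) (Fo : Obj D -> pog)
    (Fm : forall i j, Defs.Hom D i j -> pmor (Fo i) (Fo j)) (X : Type)
    (g : forall i, car (Fo i) -> X) :
  (forall i j d x, g j (Fm i j d x) = g i x) ->
  forall i j, clos_refl_sym_trans _ (fun a b => inhabited (Defs.Hom D a b)) i j ->
  g i (unit (Fo i)) = g j (unit (Fo j)).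
Proof.
move=> gFm i j; elim=> [a b [d] | a | a b _ -> | a b k _ -> _ ->] //.
by rewrite -(pm_unit (Fm a b d)) gFm.
Qed.

Section ColimitPositiveMaps.
Variables (D : category) (Fo : Obj D -> pog).
Variable Fm : forall i j, Defs.Hom D i j -> pmor (Fo i) (Fo j).
Variables (C : pog) (c : forall i, pmor (Fo i) C).
Hypothesis colim : is_colimit Fm c.

Lemma colimit_pmor_ext (C' : pog) (h1 h2 : pmor C C') :
  (forall i x, h1 (c i x) = h2 (c i x)) -> h1 =1 h2.
Proof.
move=> h12 y.
have h1c_cocone : is_cocone Fm (fun i => pmor_comp h1 (c i)).
  by move=> i j d x /=; rewrite colim.1.
have [h [_ h_uniq]] := colim.2 _ _ h1c_cocone.
by rewrite (h_uniq h1) // (h_uniq h2) // => i x; rewrite -h12.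
Qed.

Lemma colimit_pos_additive_ext (C' : pog) (g g' : car C -> car C') :
  {morph g : x y / x + y} -> {homo g : x / pos x} ->
  {morph g' : x y / x + y} -> {homo g' : x / pos x} ->
  g (unit C) = g' (unit C) -> (forall i x, g (c i x) = g' (c i x)) -> g =1 g'.
Proof.
move=> gD gP g'D g'P gg'_unit gg' y.
have pe : pos (g (unit C)) by apply/gP/pos_unit.
pose k := ideal_corestr pe gD gP erefl.
pose k' := ideal_corestr pe g'D g'P (esym gg'_unit).
have kk' : k =1 k' by apply: colimit_pmor_ext => i x; apply: val_inj; apply: gg'.
by rewrite -(ideal_corestrE pe gD gP erefl) kk'.
Qed.

Lemma colimit_pos_additive_factor (C' : pog) (g : forall i, car (Fo i) -> car C')
    (e : car C') :
  pos e -> (forall i, {morph g i : x y / x + y}) ->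
  (forall i, {homo g i : x / pos x}) ->
  (forall i j (d : Defs.Hom D i j) x, g j (Fm d x) = g i x) ->
  (forall i, g i (unit (Fo i)) = e) ->
  exists h : car C -> car C', [/\ {morph h : x y / x + y}, {homo h : x / pos x}
    & forall i x, h (c i x) = g i x].
Proof.
move=> pe gD gP gFm g_unit.
pose k i := ideal_corestr pe (gD i) (gP i) (g_unit i).
have k_cocone : is_cocone Fm k by move=> i j d x; apply: val_inj; apply: gFm.
have [h [hc _]] := colim.2 _ _ k_cocone.
exists (val \o h); split=> [x y | x px | i x] /=.
- by rewrite !raddfD.
- exact: (pm_pos h px).
- by rewrite hc.
Qed.

End ColimitPositiveMaps.

Section TensorFunctor.
Variables (A : pog) (Phi : tensor_functor A).

Lemma tauDl (B : pog) (b : car B) : {morph @tau _ Phi B ^~ b : a a' / a + a'}.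
Proof. by move=> a a'; rewrite (tau_biadd Phi B).1. Qed.

Lemma tauDr (B : pog) (a : car A) : {morph @tau _ Phi B a : b b' / b + b'}.
Proof. by move=> b b'; rewrite (tau_biadd Phi B).2. Qed.

Lemma pos_tau (B : pog) a (b : car B) : pos a -> pos b -> pos (tau Phi a b).
Proof.
move=> pa pb; apply/tau_pos; exists [:: (a, b)]; rewrite big_seq1.
by split=> // p; rewrite inE => /eqP ->.
Qed.

Lemma tensor_ext (B : pog) (G : zmodType) (psi psi' : car (T Phi B) -> G) :
  {morph psi : x y / x + y} -> {morph psi' : x y / x + y} ->
  (forall a b, psi (tau Phi a b) = psi' (tau Phi a b)) -> psi =1 psi'.
Proof.
move=> psiD psi'D psi_tau.
have psi_tau_biadd : biadditive (fun a b => psi (tau Phi a b)).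
  by split=> [a a' b | a b b']; rewrite ?tauDl ?tauDr psiD.
have [phi [_ [_ phi_uniq]]] := tau_univ Phi psi_tau_biadd.
by move=> z; rewrite (phi_uniq psi) // (phi_uniq psi').
Qed.

Lemma Tm_comp (B B' B'' : pog)
    (f : pmor B B') (f' : pmor B' B'') (g : pmor B B'') :
  (forall x, f' (f x) = g x) -> forall z, Tm Phi f' (Tm Phi f z) = Tm Phi g z.
Proof.
move=> f'fg; apply: tensor_ext => [x y | x y | a b]; rewrite ?raddfD //.
by rewrite !Tm_tau f'fg.
Qed.

End TensorFunctor.

Section TensorColimit.
Variables (A : pog) (Phi : tensor_functor A) (D : category).
Variable Fo : Obj D -> pog.
Variable Fm : forall i j, Defs.Hom D i j -> pmor (Fo i) (Fo j).
Variables (C : pog) (c : forall i, pmor (Fo i) C).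
Hypothesis colim : is_colimit Fm c.
Variable i0 : Obj D.
Hypothesis zigzag :
  forall i, clos_refl_sym_trans _ (fun a b => inhabited (Defs.Hom D a b)) i i0.
Variables (C' : pog) (c' : forall i, pmor (T Phi (Fo i)) C').
Hypothesis c'_cocone : is_cocone (fun i j d => Tm Phi (@Fm i j d)) c'.

Let unitC : unit C = c i0 (unit (Fo i0)).
Proof. by rewrite pm_unit. Qed.

Lemma slice_compatible a i j (d : Defs.Hom D i j) x :
  c' j (tau Phi a (Fm d x)) = c' i (tau Phi a x).
Proof. by rewrite -Tm_tau; apply: c'_cocone. Qed.

Lemma slice_factor a : pos a ->
  exists g : car C -> car C', [/\ {morph g : x y / x + y}, {homo g : x / pos x}
    & forall i x, g (c i x) = c' i (tau Phi a x)].
Proof.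
move=> pa; apply: (colimit_pos_additive_factor colim
  (e := c' i0 (tau Phi a (unit (Fo i0))))) => [|i x y|i x px||i].
- exact/pm_pos/pos_tau/pos_unit.
- by rewrite tauDr raddfD.
- exact/pm_pos/pos_tau.
- exact: slice_compatible.
- exact: (compatible_unit_zigzag (slice_compatible a)).
Qed.

Lemma slice_family : exists G : car A -> car C -> car C', forall a, pos a ->
  [/\ {morph G a : x y / x + y}, {homo G a : x / pos x}
    & forall i x, G a (c i x) = c' i (tau Phi a x)].
Proof.
have slice_if_pos a : exists g : car C -> car C', pos a ->
  [/\ {morph g : x y / x + y}, {homo g : x / pos x}
    & forall i x, g (c i x) = c' i (tau Phi a x)].
  case: (pselect (pos a)) => [pa | npa]; last by exists (fun=> 0).
  by have [g gP] := slice_factor pa; exists g.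
by have [G GP] := choice slice_if_pos; exists G.
Qed.

Section Slices.
Variable G : car A -> car C -> car C'.
Hypothesis G_spec : forall a, pos a ->
  [/\ {morph G a : x y / x + y}, {homo G a : x / pos x}
    & forall i x, G a (c i x) = c' i (tau Phi a x)].

Lemma slice_unique a (g : car C -> car C') : pos a ->
  {morph g : x y / x + y} -> {homo g : x / pos x} ->
  (forall i x, g (c i x) = c' i (tau Phi a x)) -> g =1 G a.
Proof.
move=> pa gD gP gc; have [GD GP Gc] := G_spec pa.
apply: (colimit_pos_additive_ext colim) => // [|i x]; last by rewrite gc Gc.
by rewrite unitC gc Gc.
Qed.

Lemma slice_additive a a' : pos a -> pos a' ->
  forall y, G (a + a') y = G a y + G a' y.
Proof.
move=> pa pa' y; have [GD GP Gc] := G_spec pa; have [GD' GP' Gc'] := G_spec pa'.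
symmetry; apply: (@slice_unique _ (fun z => G a z + G a' z)) => [|x z|x px|i x] /=.
- exact: posD.
- by rewrite GD GD' addrACA.
- by apply: posD; [apply: GP | apply: GP'].
- by rewrite Gc Gc' tauDl raddfD.
Qed.

Lemma slice_biadditive_extension : exists beta : car A -> car C -> car C',
  biadditive beta /\ forall a, pos a -> forall y, beta a y = G a y.
Proof.
have extension y : exists F : car A -> car C', {morph F : a a' / a + a'} /\
    forall a, pos a -> F a = G a y.
  by apply: pos_additive_extension => a a' pa pa'; apply: slice_additive.
have [F FP] := choice extension.
exists (fun a y => F y a); split; last by move=> a pa y; apply: (FP y).2.
split=> [a a' y | a y y']; first exact: (FP y).1.
apply: (@additive_eq_on_pos _ _ (F (y + y')) (fun a => F y a + F y' a)).
- exact: (FP _).1.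
- by move=> a1 a2 /=; rewrite !(FP _).1 addrACA.
- by move=> a1 pa1; rewrite !(FP _).2 //; case: (G_spec pa1) => GD _ _; apply: GD.
Qed.

Lemma tensor_factor_exists :
  exists h : pmor (T Phi C) C', forall i x, h (Tm Phi (c i) x) = c' i x.
Proof.
have [beta [beta_biadd betaG]] := slice_biadditive_extension.
have [phi [phiD [phi_tau _]]] := tau_univ Phi beta_biadd.
have phiP : {homo phi : z / pos z}.
  move=> z /tau_pos [s [s_pos ->]]; rewrite (add_morph_sum phiD).
  apply: pos_sum => p /s_pos [pa pb]; rewrite phi_tau betaG //.
  by case: (G_spec pa) => _ GP _; apply: GP.
have phi_unit : phi (unit (T Phi C)) = unit C'.
  have [_ _ Gc] := G_spec (pos_unit A).
  rewrite tau_unit phi_tau betaG; last exact: pos_unit.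
  by rewrite unitC Gc -tau_unit pm_unit.
exists (PMor phiD phiP phi_unit) => i /=.
apply: tensor_ext => [y y' | y y' | a b]; rewrite ?raddfD ?phiD //.
rewrite Tm_tau phi_tau.
apply: (@additive_eq_on_pos _ _ (beta ^~ (c i b)) (fun a => c' i (tau Phi a b))).
- by move=> a1 a2; rewrite (beta_biadd.1).
- by move=> a1 a2; rewrite tauDl raddfD.
- by move=> a1 pa1; rewrite betaG //; case: (G_spec pa1).
Qed.

Lemma tensor_factor_unique (h h' : pmor (T Phi C) C') :
  (forall i x, h (Tm Phi (c i) x) = c' i x) ->
  (forall i x, h' (Tm Phi (c i) x) = c' i x) -> h =1 h'.
Proof.
have factor_slice (k : pmor (T Phi C) C') :
    (forall i x, k (Tm Phi (c i) x) = c' i x) ->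
    forall a, pos a -> forall y, k (tau Phi a y) = G a y.
  move=> kc a pa; apply: slice_unique => // [y y' | y py | i x].
  - by rewrite tauDr raddfD.
  - exact/pm_pos/pos_tau.
  - by rewrite -Tm_tau kc.
move=> hc h'c; apply: tensor_ext => [y y' | y y' | a b]; rewrite ?raddfD //.
apply: (@additive_eq_on_pos _ _ (fun a => h (tau Phi a b))
  (fun a => h' (tau Phi a b))).
- by move=> a1 a2; rewrite tauDl raddfD.
- by move=> a1 a2; rewrite tauDl raddfD.
- by move=> a1 pa1; rewrite (factor_slice h) // (factor_slice h').
Qed.

End Slices.

Lemma tensor_colimit_universal :
  exists h : pmor (T Phi C) C', (forall i x, h (Tm Phi (c i) x) = c' i x) /\
    forall h' : pmor (T Phi C) C', (forall i x, h' (Tm Phi (c i) x) = c' i x) ->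
      forall y, h' y = h y.
Proof.
have [G G_spec] := slice_family.
have [h hc] := tensor_factor_exists G_spec.
by exists h; split=> // h' h'c; apply: (tensor_factor_unique G_spec).
Qed.

End TensorColimit.

Theorem corollary4p8 (A : pog) (Phi : tensor_functor A) (D : category) :
  connected D -> preserves_colimits_over Phi D.
Proof.
move=> [[i0] zigzag] Fo Fm _ C c colim; split.
  by move=> i j d z /=; apply: Tm_comp => x; apply: colim.1.
move=> C' c' c'_cocone.
exact: (tensor_colimit_universal colim (zigzag ^~ i0) c'_cocone).
Qed.
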